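(* Let $\sigma$ be an $(\alpha,\beta)$-ReLU activation applied entrywise. For every positive semidefinite $\Sigma\in\mathbb R^{n\times n}$, $\mathbb E_{h\sim N(\mathbf 0_n,\Sigma)}[\mathrm{Dir}(\sigma(h))]\le\frac{\alpha^2+\beta^2}{2}\,\mathbb E_{h\sim N(\mathbf 0_n,\Sigma)}[\mathrm{Dir}(h)].$
   Context: An activation $\sigma:\mathbb R\to\mathbb R$ is $(\alpha,\beta)$-ReLU if $\sigma(x)=\alpha x$ for $x\ge0$ and $\sigma(x)=\beta x$ for $x<0$, where $\alpha,\beta\ge0$ are not both $0$. Let $\mathcal G=(\mathcal V,\mathcal E)$ be a finite undirected graph with $n$ nodes, adjacency matrix $A$, degree matrix $D=\mathrm{diag}(A\mathbf 1_n)$ with degrees $d_i$, $\tilde A=A+I$, $\tilde D=D+I$, $\hat A=\tilde D^{-1/2}\tilde A\tilde D^{-1/2}$, $\hat L=I-\hat A$. For $x\in\mathbb R^n$, $\mathrm{Dir}(x)=x^\top\hat Lx=\sum_{\{i,j\}\in\mathcal E}(x_i/\sqrt{1+d_i}-x_j/\sqrt{1+d_j})^2$. *)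

From HB Require Import structures.
From mathcomp Require Import all_boot all_order all_algebra.
From mathcomp Require Import all_classical all_reals all_analysis.
Set Implicit Arguments. Unset Strict Implicit. Unset Printing Implicit Defensive.
Import Order.TTheory GRing.Theory Num.Theory.
Local Open Scope ring_scope.

Section Defs.
Variable R : realType.

Definition relu_ab (alpha beta : R) (x : R) : R :=
  if 0 <= x then alpha * x else beta * x.

Definition is_ab_relu (alpha beta : R) : Prop :=
  0 <= alpha /\ 0 <= beta /\ ~ (alpha = 0 /\ beta = 0).

Definition map_act n (s : R -> R) (x : 'rV[R]_n) : 'rV[R]_n := \row_i s (x 0 i).

Definition is_graph n (e : rel 'I_n) : Prop :=
  (forall i j, e i j = e j i) /\ (forall i, e i i = false).

Definition adj n (e : rel 'I_n) : 'M[R]_n := \matrix_(i, j) (e i j)%:R.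
Definition deg n (e : rel 'I_n) (i : 'I_n) : R := \sum_j adj e i j.
Definition Dtil_isqrt n (e : rel 'I_n) : 'M[R]_n :=
  diag_mx (\row_i (Num.sqrt (1 + deg e i))^-1).
Definition Ahat n (e : rel 'I_n) : 'M[R]_n :=
  Dtil_isqrt e *m (adj e + 1%:M) *m Dtil_isqrt e.
Definition Lhat n (e : rel 'I_n) : 'M[R]_n := 1%:M - Ahat e.
Definition Dir n (e : rel 'I_n) (x : 'rV[R]_n) : R := (x *m Lhat e *m x^T) 0 0.

Definition psd n (S : 'M[R]_n) : Prop :=
  S^T = S /\ forall x : 'rV[R]_n, 0 <= (x *m S *m x^T) 0 0.

(* Expectation of a nonnegative (extended-real) function of a standard
   Gaussian vector z ~ N(0, I_n), as an iterated integral over the n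
   independent N(0,1) coordinates. *)
Fixpoint std_gauss_exp (n : nat) : ('rV[R]_n -> \bar R) -> \bar R :=
  match n return ('rV[R]_n -> \bar R) -> \bar R with
  | 0 => fun f => f 0
  | m.+1 => fun f =>
      (\int[normal_prob (0:R) 1]_x
         std_gauss_exp (fun v : 'rV[R]_m => f (row_mx (\row_(_ < 1) x) v)))%E
  end.

(* E_{h ~ N(0, L L^T)} [g h], realised as h = L z with z ~ N(0, I_n). *)
Definition gauss_exp n (L : 'M[R]_n) (g : 'rV[R]_n -> \bar R) : \bar R :=
  std_gauss_exp (fun z : 'rV[R]_n => g (z *m L^T)).

End Defs.

From HB Require Import structures.
From mathcomp Require Import all_boot all_order all_algebra.
From mathcomp Require Import all_classical all_reals all_analysis.
From mathcomp Require Import ring.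
Set Implicit Arguments. Unset Strict Implicit. Unset Printing Implicit Defensive.
Import Order.TTheory GRing.Theory Num.Theory.
Local Open Scope ring_scope.
Local Open Scope classical_set_scope.

(* For the (alpha,beta)-ReLU s one has, for all reals a b,
     s(a) s(b) + s(-a) s(-b) = (alpha^2 + beta^2) a b + (alpha - beta)^2 (|a||b| - a b) / 2.
   The correction term vanishes when a = b and is nonnegative otherwise, while the
   off-diagonal entries of the normalized Laplacian are nonpositive.  Expanding the
   quadratic form entrywise therefore gives, pointwise in h,
     Dir(s(h)) + Dir(s(-h)) <= (alpha^2 + beta^2) Dir(h).
   A centred Gaussian vector is symmetric, so Dir(s(h)) and Dir(s(-h)) have the same
   expectation, and averaging the pointwise bound yields the theorem. *)

Lemma ge_ereal_supD (R : realType) (A B : set (\bar R)) (c : \bar R) :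
  A 0%E -> B 0%E -> (forall a b, A a -> B b -> a + b <= c)%E ->
  (ereal_sup A + ereal_sup B <= c)%E.
Proof.
case: c => [r| |] A0 B0 AB; last 2 first.
- exact: leey.
- by have := AB 0%E 0%E A0 B0; rewrite adde0 leeNy_eq.
rewrite -lee_suber_addr //; apply: ge_ereal_sup => a Aa.
rewrite lee_suber_addr // addeC -lee_suber_addr //.
by apply: ge_ereal_sup => b Bb; rewrite lee_suber_addr // addeC; exact: AB.
Qed.

(* Nothing here is assumed measurable: these facts only use that the integral of a
   nonnegative function is the supremum of the integrals of the simple functions
   below it. *)
Section NonnegIntegral.
Local Open Scope ereal_scope.
Import HBNNSimple.
Variables (d : measure_display) (T : measurableType d) (R : realType).
Variable mu : {measure set T -> \bar R}.
Implicit Types f g : T -> \bar R.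

Lemma ge0_le_integralT f g : (forall x, 0 <= f x) -> (forall x, f x <= g x) ->
  \int[mu]_x f x <= \int[mu]_x g x.
Proof.
move=> f0 fg; have g0 x : 0 <= g x by exact: le_trans (f0 x) (fg x).
rewrite !ge0_integralTE //; apply: ereal_sup_le => _ [h hf <-]; exists h => //.
by move=> x; exact: le_trans (hf x) (fg x).
Qed.

Lemma ge0_integralZ_le (k : R) f : (0 < k)%R -> (forall x, 0 <= f x) ->
  \int[mu]_x (k%:E * f x) <= k%:E * \int[mu]_x f x.
Proof.
move=> k0 f0; rewrite !ge0_integralTE //; last first.
  by move=> x; rewrite mule_ge0 // lee_fin ltW.
apply: ge_ereal_sup => _ [h hk <-].
have k1_ge0 : (0 <= k^-1)%R by rewrite invr_ge0 ltW.
have -> : sintegral mu h = k%:E * sintegral mu (scale_nnsfun h k1_ge0).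
  rewrite sintegralrM muleA -EFinM divff ?gt_eqF // mul1e.
  by apply: eq_sintegral => x.
rewrite lee_pmul2l ?lte_fin //; apply: ereal_sup_ubound.
exists (scale_nnsfun h k1_ge0) => // x /=.
by rewrite EFinM lee_pdivrMl // -EFinM.
Qed.

Lemma ge0_integralD_ge f g : (forall x, 0 <= f x) -> (forall x, 0 <= g x) ->
  \int[mu]_x f x + \int[mu]_x g x <= \int[mu]_x (f x + g x).
Proof.
move=> f0 g0; rewrite !ge0_integralTE //; last by move=> x; exact: adde_ge0.
apply: ge_ereal_supD; [by exists nnsfun0 => //; exact: sintegral0..|].
move=> _ _ [h1 h1f <-] [h2 h2g <-].
rewrite -sintegralD; apply: ereal_sup_ubound; exists (add_nnsfun h1 h2) => //.
by move=> x /=; rewrite EFinD; apply: leeD.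
Qed.

End NonnegIntegral.

Section SymmetricMeasure.
Local Open Scope ereal_scope.
Import HBNNSimple.
Variables (R : realType) (mu : {measure set (measurableTypeR R) -> \bar R}).
Hypothesis muN : forall A : set R, measurable A -> mu ((-%R) @^-1` A) = mu A.

Let integralN_le (f : R -> \bar R) : (forall x, 0 <= f x) ->
  \int[mu]_x f (- x)%R <= \int[mu]_x f x.
Proof.
move=> f0; rewrite ge0_integralTE //; apply: ge_ereal_sup => _ [h hf <-].
rewrite -integralT_nnsfun.
have -> : \int[mu]_x (h x)%:E =
    \int[pushforward mu (-%R : _ -> measurableTypeR R)]_x (h x)%:E.
  by apply: eq_measure_integral => /= B mB _; rewrite /pushforward muN.
rewrite ge0_integral_pushforward //=.
- apply: ge0_le_integralT => x; first by rewrite lee_fin.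
  by have := hf (- x)%R; rewrite opprK.
- by apply/measurable_realfun.measurable_EFinP; exact: measurable_funP.
- by move=> x _; rewrite lee_fin.
Qed.

Lemma ge0_integralN (f : R -> \bar R) : (forall x, 0 <= f x) ->
  \int[mu]_x f (- x)%R = \int[mu]_x f x.
Proof.
move=> f0; apply/eqP; rewrite eq_le integralN_le //=.
have := @integralN_le (fun x => f (- x)%R) (fun x => f0 _).
by under eq_integral do rewrite opprK.
Qed.

End SymmetricMeasure.

Section NormalSymmetry.
Variables (R : realType) (s : R).
Hypothesis s_neq0 : s != 0.

Lemma normal_pdfN (x : R) : normal_pdf 0 s (- x) = normal_pdf 0 s x.
Proof. by rewrite /normal_pdf (negbTE s_neq0) /normal_fun !subr0 sqrrN. Qed.

Lemma normal_probN (A : set R) : measurable A ->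
  normal_prob 0 s ((-%R) @^-1` A) = normal_prob 0 s A.
Proof.
move=> mA; rewrite /normal_prob.
transitivity (\int[pushforward lebesgue_measure (-%R : _ -> measurableTypeR R)]_(x in A)
   (normal_pdf 0 s x)%:E)%E; last first.
  by apply: eq_measure_integral => //= B mB _; exact: lebesgue_measureN.
rewrite ge0_integral_pushforward //=.
- by apply: eq_integral => x _; rewrite normal_pdfN.
- apply/measurable_realfun.measurable_EFinP; apply: measurable_funTS.
  exact: measurable_normal_pdf.
- by move=> x _; rewrite lee_fin normal_pdf_ge0.
Qed.

End NormalSymmetry.

Section StdGaussExp.
Local Open Scope ereal_scope.
Variable R : realType.
Notation E := (@std_gauss_exp R _).

Lemma std_gauss_exp_ge0 n (f : 'rV[R]_n -> \bar R) :
  (forall v, 0 <= f v) -> 0 <= E f.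
Proof.
elim: n f => [|n IH] f f0 /=; first exact: f0.
by apply: integral_ge0 => x _; apply: IH.
Qed.

Lemma le_std_gauss_exp n (f g : 'rV[R]_n -> \bar R) :
  (forall v, 0 <= f v) -> (forall v, f v <= g v) -> E f <= E g.
Proof.
elim: n f g => [|n IH] f g f0 fg /=; first exact: fg.
apply: ge0_le_integralT => x; first exact: std_gauss_exp_ge0.
exact: IH.
Qed.

Lemma std_gauss_expD_ge n (f g : 'rV[R]_n -> \bar R) :
  (forall v, 0 <= f v) -> (forall v, 0 <= g v) ->
  E f + E g <= E (fun v => f v + g v).
Proof.
elim: n f g => [|n IH] f g f0 g0 //=.
set F := fun x => E (fun v => f (row_mx (\row_(_ < 1) x) v)).
set G := fun x => E (fun v => g (row_mx (\row_(_ < 1) x) v)).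
have F0 x : 0 <= F x by exact: std_gauss_exp_ge0.
have G0 x : 0 <= G x by exact: std_gauss_exp_ge0.
apply: (le_trans (ge0_integralD_ge (normal_prob 0 1) F0 G0)).
apply: ge0_le_integralT => x; last exact: IH.
by rewrite adde_ge0 // std_gauss_exp_ge0.
Qed.

Lemma std_gauss_expZ_le n (k : R) (f : 'rV[R]_n -> \bar R) : (0 < k)%R ->
  (forall v, 0 <= f v) -> E (fun v => k%:E * f v) <= k%:E * E f.
Proof.
elim: n f => [|n IH] f k0 f0 //=.
set F := fun x => E (fun v => f (row_mx (\row_(_ < 1) x) v)).
have F0 x : 0 <= F x by exact: std_gauss_exp_ge0.
apply: le_trans (ge0_integralZ_le (normal_prob 0 1) k0 F0).
apply: ge0_le_integralT => x; last exact: IH.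
by apply: std_gauss_exp_ge0 => v; rewrite mule_ge0 // lee_fin ltW.
Qed.

Lemma std_gauss_expN n (f : 'rV[R]_n -> \bar R) : (forall v, 0 <= f v) ->
  E (fun v => f (- v)%R) = E f.
Proof.
elim: n f => [|n IH] f f0 /=; first by rewrite oppr0.
rewrite -ge0_integralN; last 2 first.
- exact: normal_probN.
- by move=> x; exact: std_gauss_exp_ge0.
apply: eq_integral => x _ /=.
rewrite -(IH (fun w => f (row_mx (\row_(_ < 1) x) w))) //.
congr std_gauss_exp; apply/funext => v; congr f.
by apply/rowP => i; rewrite !mxE; case: splitP => j _; rewrite !mxE ?opprK.
Qed.

End StdGaussExp.

Section ReLU.
Variables (R : realType) (al be : R).
Local Notation s := (relu_ab al be).

Lemma relu_abE a : s a = ((al + be) * a + (al - be) * `|a|) / 2.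
Proof.
rewrite /relu_ab; case: ifPn => [a_ge0|]; first by rewrite ger0_norm //; field.
by rewrite -ltNge => /ltr0_norm ->; field.
Qed.

Lemma relu_ab_symD a b :
  s a * s b + s (- a) * s (- b) - (al ^+ 2 + be ^+ 2) * (a * b) =
  (al - be) ^+ 2 / 2 * (`|a| * `|b| - a * b).
Proof. by rewrite !relu_abE !normrN; field. Qed.

End ReLU.

Definition qform (R : realType) n (M : 'M[R]_n) (x : 'rV[R]_n) : R :=
  (x *m M *m x^T) 0 0.

Section QuadraticForm.
Variables (R : realType) (n : nat).
Implicit Types (M : 'M[R]_n) (x : 'rV[R]_n).

Lemma qformE M x : qform M x = \sum_i \sum_j x 0 i * M i j * x 0 j.
Proof.
rewrite /qform mxE exchange_big /=; apply: eq_bigr => j _.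
by rewrite mxE mulr_suml; apply: eq_bigr => i _; rewrite !mxE.
Qed.

Lemma qform_relu_symD_le (al be : R) M x :
  (forall i j, i != j -> M i j <= 0) ->
  qform M (map_act (relu_ab al be) x) + qform M (map_act (relu_ab al be) (- x))
  <= (al ^+ 2 + be ^+ 2) * qform M x.
Proof.
move=> M_offdiag_le0; rewrite !qformE -subr_le0 mulr_sumr -big_split -sumrB /=.
apply: sumr_le0 => i _; rewrite mulr_sumr -big_split -sumrB /=.
apply: sumr_le0 => j _; rewrite !mxE.
rewrite [X in X <= 0](_ : _ = M i j *
    ((al - be) ^+ 2 / 2 * (`|x 0 i| * `|x 0 j| - x 0 i * x 0 j))).
  have [<-|ij] := eqVneq i j.
    by rewrite -normrM -expr2 ger0_norm ?sqr_ge0 // subrr !mulr0.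
  rewrite mulr_le0_ge0 ?M_offdiag_le0 // mulr_ge0 ?divr_ge0 ?sqr_ge0 //.
  by rewrite subr_ge0 -normrM ler_norm.
by rewrite -relu_ab_symD; ring.
Qed.

End QuadraticForm.

Section NormalizedLaplacian.
Variables (R : realType) (n : nat) (e : rel 'I_n).
Local Notation A := (adj R e).
Local Notation d i := (Dtil_isqrt R e i i).
Implicit Types x : 'rV[R]_n.

Lemma deg_ge0 i : 0 <= deg R e i.
Proof. by apply: sumr_ge0 => j _; rewrite mxE ler0n. Qed.

Lemma Dtil_isqrt_sqr i : d i ^+ 2 * (1 + deg R e i) = 1.
Proof.
have deg1_gt0 : 0 < 1 + deg R e i by rewrite ltr_pwDl ?deg_ge0.
by rewrite !mxE eqxx mulr1n exprVn sqr_sqrtr ?ltW // mulVf ?gt_eqF.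
Qed.

Lemma Dtil_isqrt_ge0 i : 0 <= d i.
Proof. by rewrite !mxE eqxx mulr1n invr_ge0 sqrtr_ge0. Qed.

Lemma LhatE i j : Lhat R e i j = (i == j)%:R - d i * (A i j + (i == j)%:R) * d j.
Proof.
rewrite /Lhat /Ahat /Dtil_isqrt mul_mx_diag mul_diag_mx !mxE.
by rewrite !eqxx !mulr1n eq_sym.
Qed.

Lemma Lhat_le0 i j : i != j -> Lhat R e i j <= 0.
Proof.
move=> ij; rewrite LhatE (negbTE ij) addr0 sub0r oppr_le0.
by rewrite !mulr_ge0 ?Dtil_isqrt_ge0 // mxE ler0n.
Qed.

Lemma Dir_adjE x : Dir e x =
  \sum_i \sum_j A i j * ((d i * x 0 i) ^+ 2 - d i * x 0 i * (d j * x 0 j)).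
Proof.
rewrite /Dir -/(qform _ x) qformE; apply: eq_bigr => i _.
set y := fun k => d k * x 0 k.
have -> : \sum_j x 0 i * Lhat R e i j * x 0 j =
    \sum_j ((i == j)%:R * (x 0 i * x 0 j - y i * y j)) - \sum_j A i j * (y i * y j).
  by rewrite -sumrB; apply: eq_bigr => j _; rewrite LhatE /y; ring.
rewrite (bigD1 i) //= eqxx mul1r big1 ?addr0; last first.
  by move=> j ji; rewrite eq_sym (negbTE ji) mul0r.
have -> : x 0 i * x 0 i - y i * y i = \sum_j A i j * y i ^+ 2.
  rewrite -mulr_suml -/(deg R e i) /y.
  by rewrite -[x 0 i * x 0 i]mulr1 -(Dtil_isqrt_sqr i); ring.
by rewrite -sumrB; apply: eq_bigr => j _; rewrite /y; ring.
Qed.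

Hypothesis e_sym : forall i j, e i j = e j i.

Lemma Dir_sum_sqr x : Dir e x * 2 =
  \sum_i \sum_j A i j * (d i * x 0 i - d j * x 0 j) ^+ 2.
Proof.
set y := fun k => d k * x 0 k.
have A_sym_sum : \sum_i \sum_j A i j * y j ^+ 2 = \sum_i \sum_j A i j * y i ^+ 2.
  rewrite exchange_big /=; apply: eq_bigr => i _; apply: eq_bigr => j _.
  by rewrite !mxE e_sym.
have -> : Dir e x * 2 = \sum_i \sum_j A i j * (y i - y j) ^+ 2
    + (\sum_i \sum_j A i j * y i ^+ 2 - \sum_i \sum_j A i j * y j ^+ 2).
  rewrite Dir_adjE mulr_suml -sumrB -!big_split /=; apply: eq_bigr => i _.
  by rewrite mulr_suml -sumrB -!big_split /=; apply: eq_bigr => j _; rewrite /y; ring.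
by rewrite A_sym_sum subrr addr0.
Qed.

Lemma Dir_ge0 x : 0 <= Dir e x.
Proof.
have : 0 <= Dir e x * 2.
  rewrite Dir_sum_sqr; apply: sumr_ge0 => i _; apply: sumr_ge0 => j _.
  by rewrite mulr_ge0 ?sqr_ge0 // mxE ler0n.
by rewrite pmulr_lge0.
Qed.

End NormalizedLaplacian.

Theorem mainTheorem13 (R : realType) (n : nat) (e : rel 'I_n)
  (alpha beta : R) (Sigma L : 'M[R]_n) :
  is_graph e -> is_ab_relu alpha beta ->
  psd Sigma -> L *m L^T = Sigma ->
  (gauss_exp L (fun h => (Dir e (map_act (relu_ab alpha beta) h))%:E)
   <= ((alpha ^+ 2 + beta ^+ 2) / 2)%:E * gauss_exp L (fun h => (Dir e h)%:E))%E.
Proof.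
move=> [e_sym _] [al_ge0 [be_ge0 al_be_neq0]] _ _.
set k := alpha ^+ 2 + beta ^+ 2.
have k_gt0 : 0 < k.
  rewrite lt_def addr_ge0 ?sqr_ge0 // andbT paddr_eq0 ?sqr_ge0 // !sqrf_eq0.
  by apply/negP => /andP[/eqP a0 /eqP b0]; exact: al_be_neq0.
rewrite /gauss_exp.
set F := fun z => (Dir e (map_act (relu_ab alpha beta) (z *m L^T)))%:E.
set G := fun z => (Dir e (z *m L^T))%:E.
have F_ge0 z : (0 <= F z)%E by rewrite lee_fin Dir_ge0.
have G_ge0 z : (0 <= G z)%E by rewrite lee_fin Dir_ge0.
have FN_le z : (F z + F (- z)%R <= k%:E * G z)%E.
  rewrite /F /G mulNmx -EFinD -EFinM lee_fin.
  by apply: qform_relu_symD_le => i j; exact: Lhat_le0.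
have : (2%:R%:E * std_gauss_exp F <= k%:E * std_gauss_exp G)%E.
  rewrite mule_natl mule2n -{2}(std_gauss_expN F_ge0).
  apply: le_trans (std_gauss_expD_ge F_ge0 (fun z => F_ge0 (- z)%R)) _.
  apply: le_trans (std_gauss_expZ_le k_gt0 G_ge0).
  by apply: le_std_gauss_exp => z; [exact: adde_ge0 | exact: FN_le].
by rewrite EFinM muleAC lee_pdivlMr // muleC.
Qed.
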